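(* Let $q$ be a prime power. For $n\in\{2,3\}$, the orbitals of $GU(n,q)$ acting on $\Phi(n,q)$ are exactly the $2(q^2-1)$ sets $S_{\alpha^i}$ and $R_{\alpha^i}$, $0\le i\le q^2-2$. For $n\ge 4$, the orbitals are exactly these sets together with $T$. Consequently the rank of the permutation group $(GU(n,q),\Phi(n,q))$ (equivalently, the number of relations of the Schurian association scheme $\mathcal X(GU(n,q),\Phi(n,q))$) is $2q^2-2$ if $n\in\{2,3\}$ and $2q^2-1$ if $n\ge 4$.
   Context: Let $q$ be a prime power, $V=\mathbb{F}_{q^2}^n$ with Hermitian form $\langle x,y\rangle=\sum_{k=1}^n x_k y_k^{\,q}$, $GU(n,q)=\{U\in GL_n(\mathbb{F}_{q^2}):U\bar U^T=I\}$ ($\bar U$ = entrywise $q$-th power) acting on the right on $V$, and on pairs by $(x,y)U=(xU,yU)$. $\Phi=\Phi(n,q)=\{x\in V\setminus\{0\}:\langle x,x\rangle=0\}$. An orbital is an orbit of the group on $\Phi\times\Phi$; the orbitals of a transitive group form the relations of the Schurian association scheme $\mathcal X(G,\Phi)$. Fix a primitive element $\alpha$ of $\mathbb{F}_{q^2}$; for $0\le i\le q^2-2$ let $S_{\alpha^i}=\{(x,y)\in\Phi\times\Phi:y=\alpha^ix\}$, $R_{\alpha^i}=\{(x,y)\in\Phi\times\Phi:\langle x,y\rangle=\alpha^i\}$, and $T=\{(x,y)\in\Phi\times\Phi:\langle x,y\rangle=0,\ y\notin\mathrm{Span}\{x\}\}$. *)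

From mathcomp Require Import all_boot all_algebra finalg.
Set Implicit Arguments. Unset Strict Implicit. Unset Printing Implicit Defensive.
Import GRing.Theory.
Local Open Scope ring_scope.

Section Unitary.
Variables (F : finFieldType) (q n : nat).

(* Hermitian form <x,y> = sum_k x_k y_k^q on F^n, F = F_{q^2}. *)
Definition herm (x y : 'rV[F]_n) : F := \sum_(k < n) x 0 k * (y 0 k) ^+ q.

Definition frobmx (U : 'M[F]_n) : 'M[F]_n := map_mx (fun a => a ^+ q) U.

Definition GU : {set 'M[F]_n} := [set U | U *m (frobmx U)^T == 1%:M].

Definition Phi : {set 'rV[F]_n} := [set x | (x != 0) && (herm x x == 0)].

Definition PhiPhi : {set 'rV[F]_n * 'rV[F]_n} := setX Phi Phi.

Definition orbit2 (p : 'rV[F]_n * 'rV[F]_n) : {set 'rV[F]_n * 'rV[F]_n} :=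
  [set (p.1 *m U, p.2 *m U) | U in GU].

Definition orbitals : {set {set 'rV[F]_n * 'rV[F]_n}} :=
  [set orbit2 p | p in PhiPhi].

Definition Srel (a : F) : {set 'rV[F]_n * 'rV[F]_n} :=
  [set p in PhiPhi | p.2 == a *: p.1].
Definition Rrel (a : F) : {set 'rV[F]_n * 'rV[F]_n} :=
  [set p in PhiPhi | herm p.1 p.2 == a].
Definition Trel : {set 'rV[F]_n * 'rV[F]_n} :=
  [set p in PhiPhi | (herm p.1 p.2 == 0) && ~~ [exists c : F, p.2 == c *: p.1]].

End Unitary.

From Pilot Require Import Defs.
From HB Require Import structures.
From mathcomp Require Import all_boot all_algebra fingroup pgroup abelian finfield zify.
Set Implicit Arguments. Unset Strict Implicit. Unset Printing Implicit Defensive.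
Import GRing.Theory.
Local Open Scope ring_scope.

(* Whether y is a multiple of x, and the value of <x, y>, are invariant under
   GU(n, q), so every listed relation is a union of orbitals and the relations
   partition Phi x Phi; the content is that GU(n, q) acts transitively on each
   of them. This follows from Witt's extension theorem: two families of vectors
   with the same nondegenerate Gram matrix are conjugate under GU(n, q), as both
   can be completed to bases with the same Gram matrix by adjoining orthonormal
   vectors. A pair (x, a x) is completed by an isotropic partner z of x with
   <x, z> = 1, a pair with <x, y> = a != 0 already has a nondegenerate Gram
   matrix, and a pair in T extends to a hyperbolic family (x, y, z, w), which
   exists only when n >= 4. Partners and orthonormal vectors exist because the
   trace and the norm of F_{q^2} over F_q are surjective. *)

Lemma antidiag_block_unit (R : comUnitRingType) k (B C : 'M[R]_k) :
  B \in unitmx -> C \in unitmx -> block_mx 0 B C 0 \in unitmx.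
Proof.
move=> B_unit C_unit.
suff /mulmx1_unit[] : block_mx 0 B C 0 *m block_mx 0 (invmx C) (invmx B) 0 = 1%:M by [].
by rewrite mulmx_block !(mul0mx, mulmx0, add0r, addr0) !mulmxV // -scalar_mx_block.
Qed.

(** * The Frobenius involution of F_{q^2} *)

Section FiniteField.
Variables (F : finFieldType) (q : nat) (alpha : F).
Hypothesis F_card : #|F| = (q ^ 2)%N.
Hypothesis alpha_prim : (q ^ 2 - 1)%N.-primitive_root alpha.

Lemma q_gt1 : (1 < q)%N.
Proof. by have := finNzRing_gt1 F; rewrite F_card; case: q => [|[]]. Qed.

Lemma pchar_nat_q : [pchar F].-nat q.
Proof.
have [p p_pr pcharFp] := finPcharP F.
have /abelem_pgroup := fin_ring_pchar_abelem pcharFp.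
rewrite /pgroup cardsT F_card (eq_pnat _ (pcharf_eq pcharFp)) => /pnat_dvd; apply.
exact: dvdn_mull.
Qed.

Definition frobq (a : F) : F := a ^+ q.

Lemma frobqD (a b : F) : frobq (a + b) = frobq a + frobq b.
Proof. exact: exprDn_pchar pchar_nat_q. Qed.

Lemma frobq_is_zmod_morphism : zmod_morphism frobq.
Proof.
have frobqN b : frobq (- b) = - frobq b.
  apply/eqP; rewrite -addr_eq0 -frobqD addNr /frobq expr0n.
  by have := q_gt1; case: q.
by move=> a b; rewrite frobqD frobqN.
Qed.

Lemma frobq_is_monoid_morphism : monoid_morphism frobq.
Proof. by split=> [|a b]; rewrite /frobq ?expr1n ?exprMn. Qed.

HB.instance Definition _ := GRing.isZmodMorphism.Build F F frobq frobq_is_zmod_morphism.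
HB.instance Definition _ := GRing.isMonoidMorphism.Build F F frobq frobq_is_monoid_morphism.

Lemma frobqK : involutive frobq.
Proof. by move=> a; rewrite /frobq -exprM mulnn -F_card expf_card. Qed.

Lemma alpha_neq0 : alpha != 0.
Proof.
apply/eqP => alpha0; have := prim_expr_order alpha_prim.
have /prednK <- : (0 < q ^ 2 - 1)%N by have := q_gt1; nia.
by rewrite alpha0 expr0n => /eqP; rewrite eq_sym oner_eq0.
Qed.

Lemma alpha_expr_neq0 i : alpha ^+ i != 0.
Proof. exact: expf_neq0 alpha_neq0. Qed.

Lemma alpha_expr_surj (a : F) : a != 0 -> exists i : 'I_(q ^ 2 - 1), a = alpha ^+ i.
Proof.
move=> a_neq0; have : a ^+ (q ^ 2 - 1) = 1.
  apply: (mulIf a_neq0); rewrite mul1r -exprSr subn1 prednK -F_card ?expf_card //.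
  exact: ltnW (finNzRing_gt1 F).
by case/(prim_rootP alpha_prim) => i ->; exists i.
Qed.

Lemma alpha_expr_inj : injective (fun i : 'I_(q ^ 2 - 1) => alpha ^+ i).
Proof.
by move=> i j /eqP; rewrite (eq_prim_root_expr alpha_prim) !modn_small // => /eqP/val_inj.
Qed.

Lemma alpha_expr_dvd (i j : nat) : (i <= j)%N -> alpha ^+ i = alpha ^+ j ->
  (q ^ 2 - 1 %| j - i)%N.
Proof. by move=> le_ij /eqP; rewrite (eq_prim_root_expr alpha_prim) eq_sym eqn_mod_dvd. Qed.

Lemma frobq_alpha_neq : frobq alpha != alpha.
Proof.
apply/eqP => alpha_fix; have := q_gt1 => q_gt1.
have := @alpha_expr_dvd 1 q (ltnW q_gt1); rewrite expr1 => /(_ (esym alpha_fix)).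
move/dvdn_leq; nia.
Qed.

Lemma trace_surj (c : F) : frobq c = c -> exists t, t + frobq t = c.
Proof.
move=> c_fix; have [d trd_neq0] : exists d : F, d + frobq d != 0.
  (* In characteristic 2, alpha has trace alpha^q - alpha != 0. *)
  case: (eqVneq (1 + 1 : F) 0) => [two0|]; last by exists 1; rewrite rmorph1.
  exists alpha; apply: contra frobq_alpha_neq; rewrite addrC addr_eq0 => /eqP->.
  by rewrite eq_sym -addr_eq0 -mulr2n -mulr_natr mulr2n two0 mulr0.
have trd_fix : frobq (d + frobq d) = d + frobq d.
  by rewrite rmorphD /= frobqK addrC.
exists (c / (d + frobq d) * d).
by rewrite !rmorphM fmorphV /= c_fix trd_fix -mulrDr mulfVK.
Qed.

Lemma norm_surj (c : F) : c != 0 -> frobq c = c -> exists mu, frobq mu * mu = c.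
Proof.
move=> /alpha_expr_surj[i0 ->]; move: (i0 : nat) => i {i0}.
rewrite /frobq -exprM mulnC => /esym /alpha_expr_dvd.
have := q_gt1 => q_gt1; have -> : (q ^ 2 - 1 = (q - 1) * (q + 1))%N by nia.
have -> : (q * i - i = (q - 1) * i)%N by nia.
rewrite dvdn_pmul2l; last by lia.
case/(_ _)/dvdnP => [|k i_eq]; first by nia.
by exists (alpha ^+ k); rewrite /frobq -exprM -exprD i_eq; congr (_ ^+ _); lia.
Qed.

Lemma exists_norm_eqN1 : exists nu : F, frobq nu * nu = -1.
Proof. by apply: norm_surj; rewrite ?rmorphN1 // oppr_eq0 oner_eq0. Qed.

(** * The Hermitian form and Witt's extension theorem *)

Section UnitaryGroup.
Variable n : nat.
Local Notation herm := (herm q (n := n)).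
Local Notation GU := (GU F q n).

Definition hermmx k l (A : 'M[F]_(k, n)) (B : 'M[F]_(l, n)) : 'M[F]_(k, l) :=
  A *m (map_mx frobq B)^T.

Lemma map_frobqK k l (A : 'M[F]_(k, l)) : map_mx frobq (map_mx frobq A) = A.
Proof. by rewrite -map_mx_comp map_mx_id //; exact: frobqK. Qed.

Lemma herm_hermmx (x y : 'rV[F]_n) : herm x y = hermmx x y 0 0.
Proof. by rewrite mxE; apply: eq_bigr => k _; rewrite !mxE. Qed.

Lemma hermmx_rV (x y : 'rV[F]_n) : hermmx x y = (herm x y)%:M.
Proof. by rewrite herm_hermmx -mx11_scalar. Qed.

Lemma herm_row k (A : 'M[F]_(k, n)) (z : 'rV[F]_n) i : herm z (row i A) = hermmx z A 0 i.
Proof. by rewrite herm_hermmx !mxE; apply: eq_bigr => j _; rewrite !mxE. Qed.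

Lemma hermmx_adj k l (A : 'M[F]_(k, n)) (B : 'M[F]_(l, n)) :
  hermmx B A = (map_mx frobq (hermmx A B))^T.
Proof. by rewrite /hermmx map_mxM /= -map_trmx map_frobqK trmx_mul trmxK. Qed.

Lemma herm_sym (x y : 'rV[F]_n) : herm y x = frobq (herm x y).
Proof. by rewrite !herm_hermmx hermmx_adj !mxE. Qed.

Lemma hermmxMl k l m (C : 'M[F]_(m, k)) (A : 'M[F]_(k, n)) (B : 'M[F]_(l, n)) :
  hermmx (C *m A) B = C *m hermmx A B.
Proof. exact: esym (mulmxA _ _ _). Qed.

Lemma hermmxMr k l m (A : 'M[F]_(k, n)) (C : 'M[F]_(m, l)) (B : 'M[F]_(l, n)) :
  hermmx A (C *m B) = hermmx A B *m (map_mx frobq C)^T.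
Proof. by rewrite /hermmx map_mxM trmx_mul mulmxA. Qed.

Lemma hermmxDl k l (A1 A2 : 'M[F]_(k, n)) (B : 'M[F]_(l, n)) :
  hermmx (A1 + A2) B = hermmx A1 B + hermmx A2 B.
Proof. exact: mulmxDl. Qed.

Lemma hermmxBl k l (A1 A2 : 'M[F]_(k, n)) (B : 'M[F]_(l, n)) :
  hermmx (A1 - A2) B = hermmx A1 B - hermmx A2 B.
Proof. exact: mulmxBl. Qed.

Lemma hermmxZl k l c (A : 'M[F]_(k, n)) (B : 'M[F]_(l, n)) :
  hermmx (c *: A) B = c *: hermmx A B.
Proof. exact: esym (scalemxAl _ _ _). Qed.

Lemma hermmx_block k1 k2 l1 l2 (A1 : 'M[F]_(k1, n)) (A2 : 'M[F]_(k2, n))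
    (B1 : 'M[F]_(l1, n)) (B2 : 'M[F]_(l2, n)) :
  hermmx (col_mx A1 A2) (col_mx B1 B2) =
  block_mx (hermmx A1 B1) (hermmx A1 B2) (hermmx A2 B1) (hermmx A2 B2).
Proof. by rewrite /hermmx map_col_mx tr_col_mx mul_col_row. Qed.

Lemma hermmx_col_mxr k l1 l2 (A : 'M[F]_(k, n)) (B1 : 'M[F]_(l1, n)) (B2 : 'M[F]_(l2, n)) :
  hermmx A (col_mx B1 B2) = row_mx (hermmx A B1) (hermmx A B2).
Proof. by rewrite /hermmx map_col_mx tr_col_mx mul_mx_row. Qed.

Lemma hermmx_adj_delta k (z : 'rV[F]_n) (A : 'M[F]_(k, n)) i :
  hermmx z A = delta_mx 0 i -> hermmx A z = delta_mx i 0.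
Proof. by move=> zA; rewrite hermmx_adj zA map_delta_mx trmx_delta. Qed.

Lemma hermDl (x y z : 'rV[F]_n) : herm (x + y) z = herm x z + herm y z.
Proof. by rewrite !herm_hermmx hermmxDl mxE. Qed.

Lemma hermZl c (x z : 'rV[F]_n) : herm (c *: x) z = c * herm x z.
Proof. by rewrite !herm_hermmx hermmxZl mxE. Qed.

Lemma hermDr (x y z : 'rV[F]_n) : herm z (x + y) = herm z x + herm z y.
Proof. by rewrite herm_sym hermDl rmorphD /= -!herm_sym. Qed.

Lemma hermZr c (x z : 'rV[F]_n) : herm z (c *: x) = frobq c * herm z x.
Proof. by rewrite herm_sym hermZl rmorphM /= -herm_sym. Qed.

Lemma herm_delta (x : 'rV[F]_n) j : herm x (delta_mx 0 j) = x 0 j.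
Proof. by rewrite -row1 herm_row /hermmx map_mx1 trmx1 mulmx1. Qed.

Lemma herm_nondeg (x : 'rV[F]_n) : (forall y, herm x y = 0) -> x = 0.
Proof. by move=> x_perp; apply/rowP => j; rewrite -herm_delta x_perp mxE. Qed.

Lemma GU_hermmx (U : 'M[F]_n) : (U \in GU) = (hermmx U U == 1%:M).
Proof. by rewrite inE. Qed.

Lemma hermmx_GU k l (U : 'M[F]_n) (A : 'M[F]_(k, n)) (B : 'M[F]_(l, n)) :
  U \in GU -> hermmx (A *m U) (B *m U) = hermmx A B.
Proof.
rewrite GU_hermmx /hermmx => /eqP U_unitary.
by rewrite map_mxM trmx_mul mulmxA -(mulmxA A) U_unitary mulmx1.
Qed.

Lemma anisotropic_combination (v w : 'rV[F]_n) : herm v w != 0 ->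
  exists a b : F, herm (a *: v + b *: w) (a *: v + b *: w) != 0.
Proof.
move=> vw_neq0.
have [vv0|vv_neq0] := eqVneq (herm v v) 0; last by exists 1, 0; rewrite scale0r addr0 scale1r.
have [ww0|ww_neq0] := eqVneq (herm w w) 0; last by exists 0, 1; rewrite scale0r add0r scale1r.
have expand c : herm (v + c *: w) (v + c *: w) = frobq c * herm v w + c * frobq (herm v w).
  rewrite !(hermDl, hermDr, hermZl, hermZr) vv0 ww0 (herm_sym v w).
  by rewrite !mulr0 add0r addr0.
have [tr0|tr_neq0] := eqVneq (herm v w + frobq (herm v w)) 0.
  exists 1, alpha; rewrite scale1r expand.
  move/eqP: tr0; rewrite addrC addr_eq0 => /eqP->; rewrite mulrN -mulrBl.
  by rewrite mulf_neq0 // subr_eq0 frobq_alpha_neq.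
by exists 1, 1; rewrite !scale1r -[w]scale1r expand rmorph1 !mul1r.
Qed.

Lemma hermmx_unit_rank k (A : 'M[F]_(k, n)) : hermmx A A \in unitmx -> (k <= n)%N.
Proof. by move/mxrank_unit <-; exact: leq_trans (mxrankM_maxl _ _) (rank_leq_col A). Qed.

Lemma hermmx_solve k (A : 'M[F]_(k, n)) (t : 'rV[F]_k) :
  row_free A -> exists z, hermmx z A = t.
Proof.
move=> A_free; have Abar_full : row_full (map_mx frobq A)^T.
  by rewrite /row_full mxrank_tr mxrank_map.
by have /submxP[z ->] := submx_full t Abar_full; exists z.
Qed.

Lemma exists_unit_perp k (A : 'M[F]_(k, n)) : (k < n)%N -> hermmx A A \in unitmx ->
  exists v : 'rV[F]_n, hermmx v A = 0 /\ herm v v = 1.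
Proof.
move=> lt_kn G_unit.
have [v0 v0_perp v0_neq0] : exists2 v0 : 'rV[F]_n, hermmx v0 A = 0 & v0 != 0.
  have : kermx (map_mx frobq A)^T != 0.
    rewrite -mxrank_eq0 mxrank_ker mxrank_tr mxrank_map subn_eq0 -ltnNge.
    exact: leq_ltn_trans (rank_leq_row A) lt_kn.
  by case/rowV0Pn => v /sub_kermxP v_perp v_neq0; exists v.
have [y v0y_neq0] : exists y, herm v0 y != 0.
  apply/existsP; apply: contraR v0_neq0 => /existsPn v0_rad.
  by apply/eqP/herm_nondeg => y; apply/eqP; rewrite -[_ == 0]negbK v0_rad.
(* w is the projection of y onto the orthogonal complement of the rows of A. *)
pose w := y - hermmx y A *m invmx (hermmx A A) *m A.
have w_perp : hermmx w A = 0 by rewrite hermmxBl hermmxMl mulmxKV // subrr.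
have v0w_neq0 : herm v0 w != 0.
  have A_v0 : hermmx A v0 = 0 by rewrite hermmx_adj v0_perp map_mx0 trmx0.
  rewrite herm_sym herm_hermmx hermmxBl hermmxMl A_v0 mulmx0 subr0.
  by rewrite -herm_hermmx -herm_sym.
have [a [b]] := anisotropic_combination v0w_neq0.
set u := a *: v0 + b *: w => uu_neq0.
have u_perp : hermmx u A = 0.
  by rewrite hermmxDl !hermmxZl v0_perp w_perp !scaler0 addr0.
have uu_fix : frobq (herm u u)^-1 = (herm u u)^-1 by rewrite fmorphV /= -herm_sym.
have [mu mu_norm] := norm_surj (invr_neq0 uu_neq0) uu_fix.
exists (mu *: u); split; first by rewrite hermmxZl u_perp scaler0.
by rewrite hermZl hermZr mulrA [mu * _]mulrC mu_norm mulVf.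
Qed.

Lemma GU_of_hermmx (Q Q' : 'M[F]_n) : hermmx Q Q = hermmx Q' Q' -> hermmx Q Q \in unitmx ->
  exists2 U, U \in GU & Q *m U = Q'.
Proof.
move=> eqG G_unit; have Q_unit : Q \in unitmx by move: G_unit; rewrite unitmx_mul => /andP[].
exists (invmx Q *m Q'); last by rewrite mulmxA mulmxV ?mul1mx.
rewrite GU_hermmx hermmxMl hermmxMr -eqG /hermmx !mulmxA mulVmx // mul1mx.
by rewrite -trmx_mul -map_mxM mulVmx // map_mx1 trmx1.
Qed.

Theorem witt_extension k (Q Q' : 'M[F]_(k, n)) :
  hermmx Q Q = hermmx Q' Q' -> hermmx Q Q \in unitmx ->
  exists2 U, U \in GU & Q *m U = Q'.
Proof.
move=> eqG G_unit; have le_kn := hermmx_unit_rank G_unit.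
move d_def : (n - k)%N => d.
elim: d k Q Q' d_def eqG G_unit le_kn => [|d IHd] k Q Q' d_def eqG G_unit le_kn.
  have k_eq : k = n by lia.
  by subst k; exact: GU_of_hermmx.
(* Adjoin a unit vector orthogonal to each family and extend the larger families. *)
have lt_kn : (k < n)%N by lia.
have [v [v_perp vv]] := exists_unit_perp lt_kn G_unit.
have G'_unit : hermmx Q' Q' \in unitmx by rewrite -eqG.
have [v' [v'_perp v'v']] := exists_unit_perp lt_kn G'_unit.
have hermmx_ext (P : 'M[F]_(k, n)) w : hermmx w P = 0 -> herm w w = 1 ->
    hermmx (col_mx P w) (col_mx P w) = block_mx (hermmx P P) 0 0 1%:M.
  move=> w_perp ww; rewrite hermmx_block (hermmx_adj w P) w_perp map_mx0 trmx0.
  by rewrite hermmx_rV ww.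
have [U U_GU] : exists2 U, U \in GU & col_mx Q v *m U = col_mx Q' v'.
  apply: IHd; try lia.
  - by rewrite !hermmx_ext // eqG.
  - by rewrite hermmx_ext // block_diag_mx_unit G_unit unitmx1.
by rewrite mul_col_mx => /eq_col_mx[]; exists U.
Qed.

Lemma hermmx_isotropic_pair k (X Y : 'M[F]_(k, n)) :
  hermmx X X = 0 -> hermmx Y Y = 0 ->
  hermmx (col_mx X Y) (col_mx X Y) = block_mx 0 (hermmx X Y) (map_mx frobq (hermmx X Y))^T 0.
Proof. by move=> XX YY; rewrite hermmx_block XX YY -hermmx_adj. Qed.

Lemma isotropic_pair_unit k (X Y : 'M[F]_(k, n)) :
  hermmx X X = 0 -> hermmx Y Y = 0 -> hermmx X Y \in unitmx ->
  hermmx (col_mx X Y) (col_mx X Y) \in unitmx.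
Proof.
move=> XX YY XY_unit; rewrite hermmx_isotropic_pair //.
by rewrite antidiag_block_unit // unitmx_tr map_unitmx.
Qed.

Lemma witt_isotropic_pair k (X Y X' Y' : 'M[F]_(k, n)) :
  hermmx X X = 0 -> hermmx Y Y = 0 -> hermmx X' X' = 0 -> hermmx Y' Y' = 0 ->
  hermmx X Y = hermmx X' Y' -> hermmx X Y \in unitmx ->
  exists2 U, U \in GU & X *m U = X' /\ Y *m U = Y'.
Proof.
move=> XX YY X'X' Y'Y' eqXY XY_unit.
have eqG : hermmx (col_mx X Y) (col_mx X Y) = hermmx (col_mx X' Y') (col_mx X' Y').
  by rewrite !hermmx_isotropic_pair // eqXY.
have [U U_GU] := witt_extension eqG (isotropic_pair_unit XX YY XY_unit).
by rewrite mul_col_mx => /eq_col_mx; exists U.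
Qed.

Lemma hyperbolic_partner k (A : 'M[F]_(k, n)) (i : 'I_k) :
  row_free A -> hermmx (row i A) A = 0 ->
  exists z : 'rV[F]_n, [/\ herm z z = 0, hermmx z A = delta_mx 0 i & row_free (col_mx A z)].
Proof.
set x := row i A => A_free x_perp.
have [z0 z0A] := hermmx_solve (delta_mx 0 i) A_free.
have z0x : herm z0 x = 1 by rewrite herm_row z0A mxE !eqxx.
have xx : herm x x = 0 by rewrite herm_row x_perp mxE.
have [t t_tr] : exists t, t + frobq t = - herm z0 z0.
  by apply: trace_surj; rewrite rmorphN /= -herm_sym.
pose z := z0 + t *: x.
have zA : hermmx z A = delta_mx 0 i by rewrite hermmxDl hermmxZl x_perp scaler0 addr0.
exists z; split => //.
  rewrite !(hermDl, hermDr, hermZl, hermZr) xx (herm_sym z0 x) z0x rmorph1.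
  by rewrite !mulr0 !mulr1 addr0 mulr1 -addrA (addrC (frobq t)) t_tr subrr.
apply/inj_row_free => c; rewrite -[c]hsubmxK mul_row_col => cAz.
have zx : hermmx z x = 1%:M by rewrite hermmx_rV herm_row zA mxE !eqxx.
have c2_0 : rsubmx c = 0.
  have := congr1 (fun v : 'rV[F]_n => hermmx v x) cAz.
  rewrite /= hermmxDl !hermmxMl zx mulmx1.
  by rewrite (hermmx_adj x A) x_perp map_mx0 trmx0 mulmx0 add0r /hermmx mul0mx.
move: cAz; rewrite c2_0 mul0mx addr0 => /eqP; rewrite mulmx_free_eq0 // => /eqP->.
exact: row_mx0.
Qed.

Lemma isotropic_partner (x : 'rV[F]_n) : x != 0 -> herm x x = 0 ->
  exists z, herm z z = 0 /\ herm x z = 1.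
Proof.
move=> x_neq0 xx; have x_free : row_free x by rewrite /row_free rank_rV x_neq0.
have x_perp : hermmx (row 0 x) x = 0 by rewrite row_id hermmx_rV xx raddf0.
have [z [zz zx _]] := hyperbolic_partner x_free x_perp.
by exists z; split => //; rewrite herm_sym herm_hermmx zx mxE rmorph1.
Qed.

Lemma row_free_col_rV (x y : 'rV[F]_n) : x != 0 -> ~~ [exists c, y == c *: x] ->
  row_free (col_mx x y).
Proof.
move=> x_neq0 y_indep; apply/inj_row_free => c.
rewrite -[c]hsubmxK mul_row_col [lsubmx c]mx11_scalar [rsubmx c]mx11_scalar !mul_scalar_mx.
move: (lsubmx c 0 0) (rsubmx c 0 0) => a b.
have [->|b_neq0] := eqVneq b 0.
  rewrite scale0r addr0 => /eqP; rewrite scaler_eq0 (negbTE x_neq0) orbF => /eqP->.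
  by rewrite raddf0 row_mx0.
move/eqP; rewrite addrC addr_eq0 => /eqP/(congr1 (fun v => b^-1 *: v)).
rewrite scalerK // scalerN scalerA -scaleNr => y_dep.
by case/existsP: y_indep; exists (- (b^-1 * a)); rewrite y_dep.
Qed.

Lemma delta_mx11 : delta_mx 0 0 = 1%:M :> 'M[F]_1.
Proof. by rewrite [LHS]mx11_scalar mxE. Qed.

Lemma isotropic_plane_completion (X : 'M[F]_(1 + 1, n)) :
  hermmx X X = 0 -> row_free X ->
  exists Y : 'M[F]_(1 + 1, n), hermmx Y Y = 0 /\ hermmx X Y = 1%:M.
Proof.
move=> XX X_free.
have row_perp i : hermmx (row i X) X = 0 by rewrite /hermmx -row_mul [_ *m _]XX row0.
have [z [zz zX zX_free]] := hyperbolic_partner X_free (row_perp (lshift 1 0)).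
have y_perp : hermmx (row (lshift 1 (rshift 1 0)) (col_mx X z)) (col_mx X z) = 0.
  rewrite rowKu hermmx_col_mxr row_perp (hermmx_adj z) hermmx_rV herm_row zX.
  by rewrite mxE /= !raddf0 row_mx0.
(* The partner w of the second row is taken orthogonal to z as well. *)
have [w [ww wXz _]] := hyperbolic_partner zX_free y_perp.
move: wXz; rewrite hermmx_col_mxr delta_mx_lshift => /eq_row_mx[wX wz].
exists (col_mx z w); split.
  by rewrite hermmx_block (hermmx_adj w z) wz !hermmx_rV zz ww map_mx0 trmx0 !raddf0 block_mx0.
rewrite hermmx_col_mxr (hermmx_adj_delta zX) (hermmx_adj_delta wX).
by rewrite delta_mx_ushift delta_mx_dshift delta_mx11 -block_mxEh -scalar_mx_block.
Qed.

Lemma witt_rV (x y x' y' : 'rV[F]_n) :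
  herm x x = 0 -> herm y y = 0 -> herm x' x' = 0 -> herm y' y' = 0 ->
  herm x y = herm x' y' -> herm x y != 0 ->
  exists2 U, U \in GU & x *m U = x' /\ y *m U = y'.
Proof.
move=> xx yy x'x' y'y' eqxy xy_neq0.
apply: witt_isotropic_pair; rewrite ?hermmx_rV ?xx ?yy ?x'x' ?y'y' ?eqxy ?raddf0 //.
by rewrite unitmxE det_scalar1 unitfE -eqxy.
Qed.

(** * The orbitals of GU(n, q) on pairs of isotropic vectors *)

Local Notation Phi := (Defs.Phi F q n).
Local Notation PhiPhi := (Defs.PhiPhi F q n).
Local Notation Srel := (Defs.Srel q n).
Local Notation Rrel := (Defs.Rrel q n).
Local Notation Trel := (Defs.Trel F q n).
Local Notation orbit2 := (Defs.orbit2 q (n := n)).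
Local Notation pair := ('rV[F]_n * 'rV[F]_n)%type.

Lemma GU_unit U : U \in GU -> U \in unitmx.
Proof. by rewrite GU_hermmx => /eqP/mulmx1_unit[]. Qed.

Lemma herm_GU U (x y : 'rV[F]_n) : U \in GU -> herm (x *m U) (y *m U) = herm x y.
Proof. by move=> U_GU; rewrite !herm_hermmx hermmx_GU. Qed.

Lemma inPhi (x : 'rV[F]_n) : (x \in Phi) = (x != 0) && (herm x x == 0).
Proof. by rewrite inE. Qed.

Lemma Phi_GU U x : U \in GU -> (x *m U \in Phi) = (x \in Phi).
Proof.
move=> U_GU; rewrite !inPhi herm_GU //.
by rewrite mulmx_free_eq0 // row_free_unit GU_unit.
Qed.

Lemma in_Srel a (x y : 'rV[F]_n) :
  ((x, y) \in Srel a) = [&& x \in Phi, y \in Phi & y == a *: x].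
Proof. by rewrite in_set in_setX -andbA. Qed.

Lemma in_Rrel a (x y : 'rV[F]_n) :
  ((x, y) \in Rrel a) = [&& x \in Phi, y \in Phi & herm x y == a].
Proof. by rewrite in_set in_setX -andbA. Qed.

Lemma in_Trel (x y : 'rV[F]_n) : ((x, y) \in Trel) =
  [&& x \in Phi, y \in Phi, herm x y == 0 & ~~ [exists c, y == c *: x]].
Proof. by rewrite in_set in_setX -andbA. Qed.

Lemma Srel_GU a U (x y : 'rV[F]_n) : U \in GU ->
  ((x *m U, y *m U) \in Srel a) = ((x, y) \in Srel a).
Proof. by move=> U_GU; rewrite !in_Srel !Phi_GU // scalemxAl (can_eq (mulmxK (GU_unit U_GU))). Qed.

Lemma Rrel_GU a U (x y : 'rV[F]_n) : U \in GU ->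
  ((x *m U, y *m U) \in Rrel a) = ((x, y) \in Rrel a).
Proof. by move=> U_GU; rewrite !in_Rrel !Phi_GU // herm_GU. Qed.

Lemma Trel_GU U (x y : 'rV[F]_n) : U \in GU ->
  ((x *m U, y *m U) \in Trel) = ((x, y) \in Trel).
Proof.
move=> U_GU; rewrite !in_Trel !Phi_GU // herm_GU //; congr [&& _, _, _ & ~~ _].
by apply: eq_existsb => c; rewrite scalemxAl (can_eq (mulmxK (GU_unit U_GU))).
Qed.

Lemma orbit2_eq (R : {set pair}) (p : pair) :
  (forall U x y, U \in GU -> ((x *m U, y *m U) \in R) = ((x, y) \in R)) -> p \in R ->
  {in R, forall p', exists2 U, U \in GU & p' = (p.1 *m U, p.2 *m U)} -> orbit2 p = R.
Proof.
move=> R_GU pR R_trans; apply/setP => p'; apply/imsetP/idP => [[U U_GU ->]|/R_trans//].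
by rewrite R_GU // -surjective_pairing.
Qed.

Lemma orbit2_Srel (a : F) (p : pair) : p \in Srel a -> orbit2 p = Srel a.
Proof.
move=> pS; apply: orbit2_eq => //; first exact: Srel_GU.
case: p pS => x _ /[!in_Srel] /and3P[/[!inPhi] /andP[x_neq0 /eqP xx] _ /eqP->].
case=> x' _ /[!in_Srel] /and3P[/[!inPhi] /andP[x'_neq0 /eqP x'x'] _ /eqP->].
have [z [zz xz]] := isotropic_partner x_neq0 xx.
have [z' [z'z' x'z']] := isotropic_partner x'_neq0 x'x'.
have [|U U_GU [xU _]] := witt_rV xx zz x'x' z'z' (etrans xz (esym x'z')).
  by rewrite xz oner_eq0.
by exists U; rewrite // -scalemxAl xU.
Qed.

Lemma orbit2_Rrel (a : F) (p : pair) : a != 0 -> p \in Rrel a -> orbit2 p = Rrel a.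
Proof.
move=> a_neq0 pR; apply: orbit2_eq => //; first exact: Rrel_GU.
case: p pR => x y /[!in_Rrel] /[!inPhi] /and3P[/andP[_ /eqP xx] /andP[_ /eqP yy] /eqP xy].
case=> x' y' /[!in_Rrel] /[!inPhi] /and3P[/andP[_ /eqP x'x'] /andP[_ /eqP y'y'] /eqP x'y'].
have [|U U_GU [xU yU]] := witt_rV xx yy x'x' y'y' (etrans xy (esym x'y')); first by rewrite xy.
by exists U; rewrite //= xU yU.
Qed.

Lemma Trel_hyperbolic (x y : 'rV[F]_n) : (x, y) \in Trel ->
  exists Y, [/\ hermmx (col_mx x y) (col_mx x y) = 0, hermmx Y Y = 0
              & hermmx (col_mx x y) Y = 1%:M].
Proof.
rewrite in_Trel !inPhi => /and4P[/andP[x_neq0 /eqP xx] /andP[_ /eqP yy] /eqP xy y_indep].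
have yx : herm y x = 0 by rewrite herm_sym xy rmorph0.
have XX : hermmx (col_mx x y) (col_mx x y) = 0.
  by rewrite hermmx_block !hermmx_rV xx xy yx yy !raddf0 block_mx0.
have [Y [YY XY]] := isotropic_plane_completion XX (row_free_col_rV x_neq0 y_indep).
by exists Y.
Qed.

Lemma Trel_dim (p : pair) : p \in Trel -> (4 <= n)%N.
Proof.
case: p => x y /Trel_hyperbolic[Y [XX YY XY]].
have XY_unit : hermmx (col_mx x y) Y \in unitmx by rewrite XY unitmx1.
exact: hermmx_unit_rank (isotropic_pair_unit XX YY XY_unit).
Qed.

Lemma orbit2_Trel (p : pair) : p \in Trel -> orbit2 p = Trel.
Proof.
move=> pT; apply: orbit2_eq => //; first exact: Trel_GU.
case: p pT => x y /Trel_hyperbolic[Y [XX YY XY]] [x' y'] /Trel_hyperbolic[Y' [X'X' Y'Y' X'Y']].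
have [|U U_GU [XU _]] := witt_isotropic_pair XX YY X'X' Y'Y' (etrans XY (esym X'Y')).
  by rewrite XY unitmx1.
by exists U => //; move: XU; rewrite mul_col_mx => /eq_col_mx[-> ->].
Qed.

Lemma orbit2_cases (p : pair) : p \in PhiPhi ->
  [\/ exists2 a, a != 0 & orbit2 p = Srel a,
      exists2 a, a != 0 & orbit2 p = Rrel a
    | (4 <= n)%N /\ orbit2 p = Trel].
Proof.
case: p => x y /[!in_setX] /andP[xP yP].
have [/existsP[c /eqP y_def]|y_indep] := boolP [exists c, y == c *: x].
  apply: Or31; exists c; last by apply: orbit2_Srel; rewrite in_Srel xP yP y_def eqxx.
  by apply: contraTneq yP => c0; rewrite y_def c0 scale0r inPhi eqxx.
have [xy0|xy_neq0] := eqVneq (herm x y) 0.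
  have pT : (x, y) \in Trel by rewrite in_Trel xP yP xy0 eqxx.
  by apply: Or33; split; [exact: Trel_dim pT | exact: orbit2_Trel].
by apply: Or32; exists (herm x y) => //; apply: orbit2_Rrel; rewrite // in_Rrel xP yP eqxx.
Qed.

Definition coordvec (nu : F) (i j : 'I_n) : 'rV[F]_n := delta_mx 0 i + nu *: delta_mx 0 j.

Lemma coordvec_entry nu i j k : coordvec nu i j 0 k = (k == i)%:R + nu * (k == j)%:R.
Proof. by rewrite !mxE. Qed.

Lemma herm_coordvec nu i j k l : herm (coordvec nu i j) (coordvec nu k l) =
  (k == i)%:R + frobq nu * (l == i)%:R + nu * ((k == j)%:R + frobq nu * (l == j)%:R).
Proof. by rewrite !(hermDl, hermDr, hermZl, hermZr) !herm_delta !mxE. Qed.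

Lemma coordvec_isotropic nu i j : frobq nu * nu = -1 -> i != j ->
  herm (coordvec nu i j) (coordvec nu i j) = 0.
Proof.
move=> nu_norm ij; rewrite herm_coordvec !eqxx (negbTE ij) eq_sym (negbTE ij).
by rewrite mulr0 add0r mulr1 addr0 mulrC nu_norm subrr.
Qed.

Lemma coordvec_neq0 nu i j : i != j -> coordvec nu i j != 0.
Proof.
move=> ij; apply/negP => /eqP/rowP/(_ i)/eqP.
by rewrite coordvec_entry mxE eqxx eq_sym (negbTE ij) mulr0 addr0 /= mulr1n eq_sym oner_eq0.
Qed.

Hypothesis n_ge2 : (2 <= n)%N.

Lemma exists_isotropic : exists x, x \in Phi.
Proof.
have [nu nu_norm] := exists_norm_eqN1.
pose i0 : 'I_n := Ordinal (ltnW n_ge2); pose i1 : 'I_n := Ordinal n_ge2.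
by exists (coordvec nu i0 i1); rewrite inPhi coordvec_neq0 // coordvec_isotropic ?eqxx.
Qed.

Lemma Srel_witness (a : F) : a != 0 -> exists p, p \in Srel a.
Proof.
move=> a_neq0; have [x xP] := exists_isotropic; exists (x, a *: x).
move: (xP); rewrite in_Srel inPhi => /andP[x_neq0 /eqP xx].
by rewrite inPhi scaler_eq0 negb_or a_neq0 x_neq0 hermZl hermZr xx !mulr0 !eqxx.
Qed.

Lemma Rrel_witness (b : F) : b != 0 -> exists p, p \in Rrel b.
Proof.
move=> b_neq0; have [x xP] := exists_isotropic; move: (xP); rewrite inPhi => /andP[x_neq0 /eqP xx].
have [z [zz xz]] := isotropic_partner x_neq0 xx.
have z_neq0 : z != 0.
  by apply: contra_eq_neq xz => ->; rewrite -(scale0r 0) hermZr rmorph0 mul0r eq_sym oner_eq0.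
exists (x, frobq b *: z); rewrite in_Rrel xP inPhi scaler_eq0 negb_or z_neq0.
by rewrite fmorph_eq0 b_neq0 !hermZl !hermZr zz xz frobqK !mulr0 mulr1 !eqxx.
Qed.

Lemma Trel_witness : (4 <= n)%N -> exists p, p \in Trel.
Proof.
move=> n_ge4; have [nu nu_norm] := exists_norm_eqN1.
pose e k (lt_k4 : (k < 4)%N) : 'I_n := Ordinal (leq_trans lt_k4 n_ge4).
pose x := coordvec nu (e 0 isT) (e 1 isT); pose y := coordvec nu (e 2 isT) (e 3 isT).
exists (x, y); rewrite in_Trel !inPhi !coordvec_neq0 // !coordvec_isotropic //.
rewrite herm_coordvec /= !(mulr0, addr0) !eqxx /=.
apply/negP => /existsP[c /eqP/rowP/(_ (e 2 isT))/eqP].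
by rewrite !coordvec_entry mxE /x coordvec_entry /= !(mulr0, addr0) oner_eq0.
Qed.

Local Notation Sfam := [set Srel (alpha ^+ i) | i : 'I_(q ^ 2 - 1)].
Local Notation Rfam := [set Rrel (alpha ^+ i) | i : 'I_(q ^ 2 - 1)].
Local Notation Tfam := (if (4 <= n)%N then [set Trel] else set0).

Lemma orbitals_eq : orbitals F q n = Sfam :|: Rfam :|: Tfam.
Proof.
apply/setP => X; rewrite !in_setU; apply/imsetP/idP.
  case=> p /orbit2_cases[[a a_neq0]|[a a_neq0]|[n_ge4]] -> ->.
  - have [i ->] := alpha_expr_surj a_neq0.
    by apply/orP; left; apply/orP; left; apply/imsetP; exists i.
  - have [i ->] := alpha_expr_surj a_neq0.
    by apply/orP; left; apply/orP; right; apply/imsetP; exists i.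
  - by rewrite n_ge4 in_set1 eqxx orbT.
case/orP => [/orP[]|].
- case/imsetP => i _ ->; have [p pS] := Srel_witness (alpha_expr_neq0 i).
  by exists p; [move: pS; rewrite inE => /andP[] | rewrite (orbit2_Srel pS)].
- case/imsetP => i _ ->; have [p pR] := Rrel_witness (alpha_expr_neq0 i).
  by exists p; [move: pR; rewrite inE => /andP[] | rewrite (orbit2_Rrel (alpha_expr_neq0 i) pR)].
case: ifP => [n_ge4 /set1P ->|]; last by rewrite in_set0.
have [p pT] := Trel_witness n_ge4.
by exists p; [move: pT; rewrite inE => /andP[] | rewrite (orbit2_Trel pT)].
Qed.

Lemma Srel_alpha_inj : injective (fun i : 'I_(q ^ 2 - 1) => Srel (alpha ^+ i)).
Proof.
move=> i j /= eq_ij; apply: alpha_expr_inj.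
have [[x y] pS] := Srel_witness (alpha_expr_neq0 i).
have := pS; rewrite eq_ij in_Srel => /and3P[_ _].
move: pS; rewrite in_Srel inPhi => /and3P[/andP[x_neq0 _] _ /eqP->].
by rewrite -subr_eq0 -scalerBl scaler_eq0 (negbTE x_neq0) orbF subr_eq0 => /eqP.
Qed.

Lemma Rrel_alpha_inj : injective (fun i : 'I_(q ^ 2 - 1) => Rrel (alpha ^+ i)).
Proof.
move=> i j /= eq_ij; apply: alpha_expr_inj.
have [[x y] pR] := Rrel_witness (alpha_expr_neq0 i).
have := pR; rewrite eq_ij in_Rrel => /and3P[_ _ /eqP <-].
by move: pR; rewrite in_Rrel => /and3P[_ _ /eqP].
Qed.

Lemma Srel_neq_Rrel (a b : F) : b != 0 -> Srel a != Rrel b.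
Proof.
move=> b_neq0; have [[x y] pR] := Rrel_witness b_neq0.
move: (pR); rewrite in_Rrel inPhi => /and3P[/andP[_ /eqP xx] _ /eqP xy].
apply: contraTneq pR => <-; rewrite in_Srel; apply/negP => /and3P[_ _ /eqP y_def].
by move: b_neq0; rewrite -xy y_def hermZr xx mulr0 eqxx.
Qed.

Lemma Trel_neq_Srel (a : F) : (4 <= n)%N -> Trel != Srel a.
Proof.
move=> n_ge4; have [[x y] pT] := Trel_witness n_ge4.
move: (pT); rewrite in_Trel => /and4P[_ _ _ y_indep].
apply: contraTneq pT => ->; rewrite in_Srel; apply: contraNN y_indep => /and3P[_ _ y_def].
by apply/existsP; exists a.
Qed.

Lemma Trel_neq_Rrel (b : F) : (4 <= n)%N -> b != 0 -> Trel != Rrel b.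
Proof.
move=> n_ge4 b_neq0; have [[x y] pT] := Trel_witness n_ge4.
move: (pT); rewrite in_Trel => /and4P[_ _ /eqP xy _].
apply: contraTneq pT => ->; rewrite in_Rrel; apply/negP => /and3P[_ _].
by rewrite xy eq_sym (negbTE b_neq0).
Qed.

Lemma card_orbitals :
  #|orbitals F q n| = (if (n <= 3)%N then 2 * q ^ 2 - 2 else 2 * q ^ 2 - 1)%N.
Proof.
have SR : Sfam :&: Rfam = set0.
  apply/setP => X; rewrite in_setI in_set0; apply/negP => /andP[/imsetP[i _ ->] /imsetP[j _ /eqP]].
  by rewrite (negbTE (Srel_neq_Rrel _ (alpha_expr_neq0 j))).
have card_fam (f : F -> {set pair}) : injective (fun i : 'I_(q ^ 2 - 1) => f (alpha ^+ i)) ->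
    #|[set f (alpha ^+ i) | i : 'I_(q ^ 2 - 1)]| = (q ^ 2 - 1)%N.
  by move=> f_inj; rewrite card_imset ?card_ord.
rewrite orbitals_eq cardsU cardsU SR cards0 subn0.
rewrite (card_fam _ Srel_alpha_inj) (card_fam _ Rrel_alpha_inj).
have := q_gt1 => q_gt1; have [n_ge4|n_lt4] := leqP 4 n; last first.
  rewrite setI0 !cards0 ifT; last by lia.
  by rewrite !subn0 addn0; nia.
have T_notin : Trel \notin Sfam :|: Rfam.
  rewrite in_setU negb_or; apply/andP; split; apply/imsetP => -[i _ /eqP].
    by rewrite (negbTE (Trel_neq_Srel _ n_ge4)).
  by rewrite (negbTE (Trel_neq_Rrel n_ge4 (alpha_expr_neq0 i))).
rewrite setIC disjoint_setI0 ?disjoints1 // cards0 subn0 cards1 ifF; last by lia.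
nia.
Qed.

End UnitaryGroup.
End FiniteField.

Theorem theorem2p12 (F : finFieldType) (q n : nat) (alpha : F) :
  #|F| = (q ^ 2)%N ->
  (q ^ 2 - 1)%N.-primitive_root alpha ->
  (2 <= n)%N ->
  orbitals F q n =
    [set Srel q n (alpha ^+ i) | i : 'I_(q ^ 2 - 1)]
    :|: [set Rrel q n (alpha ^+ i) | i : 'I_(q ^ 2 - 1)]
    :|: (if (4 <= n)%N then [set Trel F q n] else set0)
  /\ #|orbitals F q n| = (if (n <= 3)%N then 2 * q ^ 2 - 2 else 2 * q ^ 2 - 1)%N.
Proof.
move=> F_card alpha_prim n_ge2; split.
  exact: (orbitals_eq F_card alpha_prim n_ge2).
exact: (card_orbitals F_card alpha_prim n_ge2).
Qed.
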